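(* Let $q$ be a power of an odd prime, $n>3$ an odd integer with $\gcd(n,q-1)=1$, $\delta\in\mathbb{F}_{q^n}^*$ with $\delta\neq1$ and multiplicative order of $\delta$ dividing $q-1$, and $0<r<n$ an integer with $\gcd(r,n)=1$. Then $S(x)=x^q+\delta x^{q^{2r+1}}$ is a scattered polynomial of index $r+1$ over $\mathbb{F}_{q^n}$. Moreover, $S(x)$ is a scattered polynomial of index $t$ over $\mathbb{F}_{q^n}$ for each $t\in\{1,r+1,2r+1\}$.
   Context: For a polynomial $S\in\mathbb{F}_{q^n}[x]$ and a nonnegative integer $t$, $S$ is a scattered polynomial of index $t$ over $\mathbb{F}_{q^n}$ if for all $y,z\in\mathbb{F}_{q^n}^*$, $\frac{S(y)}{y^{q^t}}=\frac{S(z)}{z^{q^t}}$ implies $y/z\in\mathbb{F}_q$ (exponents $q^{e}$ are evaluated as maps on $\mathbb{F}_{q^n}$, so only $e \bmod n$ matters). *)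

From HB Require Import structures.
From mathcomp Require Import all_boot all_order all_algebra all_field.
Set Implicit Arguments. Unset Strict Implicit. Unset Printing Implicit Defensive.
Import GRing.Theory.
Local Open Scope ring_scope.

(* L is meant to be F_{q^n} (a finite field with #|L| = q^n).
   The subfield F_q is {x | x^q = x}. q^e-th powers are the maps x |-> x^(q^e). *)

Definition scattered (L : finFieldType) (q t : nat) (S : {poly L}) : Prop :=
  forall y z : L, y != 0 -> z != 0 ->
    S.[y] / y ^+ (q ^ t) = S.[z] / z ^+ (q ^ t) ->
    (y / z) ^+ q = y / z.

From HB Require Import structures.
From mathcomp Require Import all_boot all_order all_algebra all_field.
From mathcomp Require Import ring.
Local Open Scope ring_scope.
Import GRing.Theory.
Set Implicit Arguments. Unset Strict Implicit.

(* Put a := y^q, b := z^q and s := x |-> x^(q^r), so that S(y) = a + delta s(s(a)).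
   For the indices 1 and 2r+1 the equality of S(y)/y^(q^t) and S(z)/z^(q^t) says
   s^2(a)/a = s^2(b)/b, i.e. a/b is fixed by s^2; since gcd(2r, n) = 1, a/b lies
   in F_q, whence so does y/z. For the index r+1, w := a s(b) - b s(a) satisfies
   w = delta s(w), and iterating n times gives w = delta^n w. Now delta^n = 1
   together with delta^(q-1) = 1 and gcd(n, q-1) = 1 would force delta = 1, so
   w = 0: a/b is fixed by s and gcd(r, n) = 1 concludes as before. *)

Lemma iter_fixed_gcdn (T : Type) (f : T -> T) (x : T) m e : (0 < m)%N ->
  iter m f x = x -> iter e f x = x -> iter (gcdn m e) f x = x.
Proof.
move=> m_gt0 fix_m fix_e; have [km ke def _] := egcdnP e m_gt0.
have fix_mul j k : iter k f x = x -> iter (j * k) f x = x.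
  by move=> fix_k; rewrite iterM iter_fix.
by rewrite -{2}(fix_mul km m fix_m) def addnC iterD fix_mul.
Qed.

Lemma iter_expr (R : pzSemiRingType) (x : R) q e :
  iter e (fun y => y ^+ q) x = x ^+ (q ^ e).
Proof. by elim: e => [|e IHe]; rewrite ?expr1 //= IHe expnSr exprM. Qed.

Lemma expr_coprime_eq1 (R : pzRingType) (x : R) m e : (0 < m)%N -> coprime m e ->
  x ^+ m = 1 -> x ^+ e = 1 -> x = 1.
Proof.
move=> m_gt0 co_me xm xe.
have := @iter_fixed_gcdn _ ( *%R x) 1 m e m_gt0.
by rewrite !iter_mulr_1 (eqP co_me) expr1; apply.
Qed.

Lemma exprq_fixed_coprime (R : pzSemiRingType) (u : R) q n e : (0 < n)%N ->
  coprime n e -> u ^+ (q ^ n) = u -> (u ^+ q) ^+ (q ^ e) = u ^+ q -> u ^+ q = u.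
Proof.
move=> n_gt0 co_ne fix_n fix_e.
have fix_1 : iter (gcdn n e) (fun y => y ^+ q) (u ^+ q) = u ^+ q.
  apply: iter_fixed_gcdn; rewrite // !iter_expr //.
  by rewrite -exprM mulnC exprM fix_n.
rewrite (eqP co_ne) in fix_1.
by rewrite -{2}fix_n -iter_expr -(prednK n_gt0) iterSr iter_fix.
Qed.

Lemma exprB_pchar (R : comNzRingType) (x y : R) m :
  [pchar R].-nat m -> (x - y) ^+ m = x ^+ m - y ^+ m.
Proof. by move=> pchar_m; rewrite exprDn_pchar // exprNn_pchar. Qed.

Lemma twisted_frob_fixed (R : comPzSemiRingType) (c w : R) q n e :
  c ^+ (q ^ e) = c -> w ^+ (q ^ n) = w -> w = c * w ^+ (q ^ e) -> w = c ^+ n * w.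
Proof.
move=> fix_c fix_w w_eq.
have iter_w j : w = c ^+ j * w ^+ (q ^ (e * j)).
  elim: j => [|j IHj]; first by rewrite mul1r muln0 expr1.
  rewrite {1}w_eq {1}IHj exprMn -exprM mulnC exprM fix_c -exprM -expnD.
  by rewrite mulnS addnC mulrA -exprS.
by rewrite {1}(iter_w n) -iter_expr iterM iter_fix // iter_expr.
Qed.

Lemma div_expr_fixed (F : fieldType) (a b : F) m : a != 0 -> b != 0 ->
  a ^+ m / a = b ^+ m / b -> (a / b) ^+ m = a / b.
Proof.
move=> a0 b0 /eqP; rewrite eqr_div // => /eqP eq_ab.
rewrite exprMn exprVn; apply/eqP; rewrite eqr_div ?expf_neq0 //.
by rewrite eq_ab mulrC.
Qed.

Lemma expr_expn_double_succ (R : pzSemiRingType) (x : R) q r :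
  x ^+ (q ^ (2 * r + 1)) = (x ^+ q) ^+ (q ^ (r + r)).
Proof. by rewrite addn1 mul2n -addnn expnS exprM. Qed.

Section Scattered.
Variables (L : finFieldType) (q n r : nat) (delta : L).
Hypothesis n_gt0 : (0 < n)%N.
Hypothesis frob_n : forall x : L, x ^+ (q ^ n) = x.

Local Notation S := ('X^q + delta *: 'X^(q ^ (2 * r + 1)) : {poly L}).

Lemma hornerS y : S.[y] = y ^+ q + delta * (y ^+ q) ^+ (q ^ (r + r)).
Proof. by rewrite hornerD hornerZ !hornerXn expr_expn_double_succ. Qed.

Lemma exprq_div_fixed (y z : L) e : coprime n e -> y != 0 -> z != 0 ->
  (y ^+ q) ^+ (q ^ e) / y ^+ q = (z ^+ q) ^+ (q ^ e) / z ^+ q ->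
  (y / z) ^+ q = y / z.
Proof.
move=> co_ne y0 z0 eq_yz.
apply: (exprq_fixed_coprime n_gt0 co_ne (frob_n _)).
by rewrite exprMn exprVn div_expr_fixed ?expf_neq0.
Qed.

Hypothesis n_odd : odd n.
Hypothesis co_rn : coprime r n.

Lemma coprime_n_double_r : coprime n (r + r).
Proof. by rewrite coprime_sym addnn -mul2n coprimeMl coprime2n n_odd co_rn. Qed.

Hypothesis delta_neq0 : delta != 0.

Lemma scattered_index1 : scattered q 1 S.
Proof.
move=> y z y0 z0; rewrite !hornerS expn1 => eq_S.
apply: (exprq_div_fixed coprime_n_double_r y0 z0); move: eq_S.
rewrite !mulrDl !divff ?expf_neq0 // => /addrI.
by rewrite -!mulrA => /(mulfI delta_neq0).
Qed.

Lemma scattered_index_double_r_succ : scattered q (2 * r + 1) S.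
Proof.
move=> y z y0 z0; rewrite !hornerS !expr_expn_double_succ => eq_S.
apply: (exprq_div_fixed coprime_n_double_r y0 z0); move: eq_S.
rewrite !mulrDl !mulfK ?expf_neq0 // => /addIr /(congr1 GRing.inv).
by rewrite !invf_div.
Qed.

Hypothesis q_pchar : [pchar L].-nat q.
Hypothesis delta_fixed : delta ^+ q = delta.
Hypothesis delta_n : delta ^+ n != 1.

Lemma scattered_index_r_succ : scattered q r.+1 S.
Proof.
move=> y z y0 z0; rewrite !hornerS !expnS expnD !exprM.
set a := y ^+ q; set b := z ^+ q; set m := (q ^ r)%N => eq_S.
have a0 : a != 0 by rewrite expf_neq0.
have b0 : b != 0 by rewrite expf_neq0.
apply: (exprq_div_fixed (e := r) _ y0 z0); first by rewrite coprime_sym.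
pose w := a * b ^+ m - b * a ^+ m.
have w_twisted : w = delta * w ^+ m.
  (* Clear denominators in eq_S, then use that x |-> x^m is additive. *)
  move/eqP: eq_S; rewrite eqr_div ?expf_neq0 // => /eqP cross.
  rewrite /w exprB_pchar ?pnatX ?q_pchar // !exprMn.
  apply/eqP; rewrite -subr_eq0; apply/eqP.
  by rewrite -[RHS](subrr ((b + delta * (b ^+ m) ^+ m) * a ^+ m)) -{1}cross; ring.
have delta_m : delta ^+ m = delta by rewrite -iter_expr iter_fix.
have w0 : w = 0.
  apply/eqP; apply: contraNT delta_n => w_neq0; apply/eqP/(mulIf w_neq0).
  by rewrite mul1r -(twisted_frob_fixed delta_m (frob_n w) w_twisted).
apply/eqP; rewrite eqr_div // mulrC [b ^+ m * a]mulrC eq_sym -subr_eq0.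
by rewrite -/w w0.
Qed.

End Scattered.

Theorem mainTheorem13 (p k n r : nat) (L : finFieldType) (delta : L) :
  prime p -> odd p -> (0 < k)%N ->
  #|L| = ((p ^ k) ^ n)%N ->
  odd n -> (3 < n)%N -> coprime n (p ^ k).-1 ->
  delta != 0 -> delta != 1 -> delta ^+ (p ^ k).-1 = 1 ->
  (0 < r)%N -> (r < n)%N -> coprime r n ->
  let q := (p ^ k)%N in
  let S : {poly L} := 'X^q + delta *: 'X^(q ^ (2 * r + 1)) in
  scattered q r.+1 S /\
  (forall t : nat, t \in [:: 1%N; r.+1; (2 * r + 1)%N] -> scattered q t S).
Proof.
move=> p_prime _ _ cardL n_odd n_gt3 co_nq delta0 delta1 delta_q1 _ _ co_rn q S.
have n_gt0 : (0 < n)%N := leq_ltn_trans (leq0n 3) n_gt3.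
have frob_n (x : L) : x ^+ (q ^ n) = x by rewrite -cardL expf_card.
have q_pchar : [pchar L].-nat q.
  have p_pchar : p \in [pchar L].
    by apply: (@card_finPcharP _ _ (k * n)); rewrite // cardL expnM.
  by rewrite (eq_pnat _ (pcharf_eq p_pchar)) pnatX pnat_id.
have delta_fixed : delta ^+ q = delta.
  by rewrite -(prednK (_ : 0 < q)%N) ?expn_gt0 ?prime_gt0 // exprS delta_q1 mulr1.
have delta_n : delta ^+ n != 1.
  apply: contra delta1 => /eqP delta_n1.
  by rewrite (expr_coprime_eq1 n_gt0 co_nq delta_n1 delta_q1).
have index_r_succ : scattered q r.+1 S :=
  scattered_index_r_succ n_gt0 frob_n co_rn q_pchar delta_fixed delta_n.
split=> // t; rewrite !inE => /or3P[] /eqP -> //.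
  exact: scattered_index1 n_gt0 frob_n n_odd co_rn delta0.
exact: scattered_index_double_r_succ n_gt0 frob_n n_odd co_rn.
Qed.
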